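(* Let $f:\mathbb{R}^n\to\mathbb{R}\cup\{+\infty\}$ be a polyhedral M-convex function with bounded $\operatorname{dom}_{\mathbb{R}} f$. Then for all $x,y\in\operatorname{dom}_{\mathbb{R}} f$, $f(y)-f(x)\ge\tfrac12\|y-x\|_1\,\phi_{\mathbb{R}}(x)$.
   Context: $N=\{1,\dots,n\}$; $\chi_i$ is the $i$-th unit vector. $\operatorname{dom}_{\mathbb{R}} f=\{x\in\mathbb{R}^n:f(x)<+\infty\}$. A polyhedral convex function $f:\mathbb{R}^n\to\mathbb{R}\cup\{+\infty\}$ (epigraph a polyhedron, $\operatorname{dom}_{\mathbb{R}} f\neq\emptyset$) is M-convex if for all $x,y\in\operatorname{dom}_{\mathbb{R}} f$ and every $i$ with $x(i)>y(i)$ there exist $j$ with $x(j)<y(j)$ and $\epsilon_0>0$ such that $f(x)+f(y)\ge f(x-\epsilon(\chi_i-\chi_j))+f(y+\epsilon(\chi_i-\chi_j))$ for all $\epsilon\in[0,\epsilon_0]$. For $x\in\operatorname{dom}_{\mathbb{R}} f$, $f'_{\mathbb{R}}(x;i,j)=\lim_{\alpha\downarrow0}(f(x+\alpha(\chi_i-\chi_j))-f(x))/\alpha$ (possibly $+\infty$), and $\phi_{\mathbb{R}}(x)=\min_{i,j\in N}f'_{\mathbb{R}}(x;i,j)$. *)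

From HB Require Import structures.
From mathcomp Require Import all_boot all_order all_algebra.
From mathcomp Require Import all_classical all_reals all_analysis.
Set Implicit Arguments. Unset Strict Implicit. Unset Printing Implicit Defensive.
Import Order.TTheory GRing.Theory Num.Theory.
Import numFieldNormedType.Exports.
Local Open Scope classical_set_scope.
Local Open Scope ring_scope.

Section Defs.
Variables (R : realType) (n : nat).
Implicit Types (f : ('I_n -> R) -> \bar R) (x y : 'I_n -> R).

Definition chi (i : 'I_n) : 'I_n -> R := fun k => (k == i)%:R.

Definition move x (a : R) (i j : 'I_n) : 'I_n -> R :=
  fun k => x k + a * (chi i k - chi j k).

Definition domR f : set ('I_n -> R) := [set x | (f x < +oo)%E].

(* f : R^n -> R \cup {+oo} *)
Definition no_minfty f := forall x, f x != -oo%E.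

(* the epigraph {(x,t) | f x <= t} is a polyhedron, i.e. the solution set
   of finitely many linear inequalities in (x, t) *)
Definition epi_polyhedral f := exists (m : nat) (A : 'I_m -> 'I_n -> R)
  (b : 'I_m -> R) (c : 'I_m -> R), forall x (t : R),
    (f x <= t%:E)%E <-> (forall k, \sum_(i < n) A k i * x i + b k * t <= c k).

Definition polyhedral_convex f :=
  [/\ no_minfty f, epi_polyhedral f & domR f !=set0].

Definition M_convex f :=
  polyhedral_convex f /\
  forall x y, domR f x -> domR f y -> forall i, y i < x i ->
    exists j, x j < y j /\ exists2 eps0 : R, 0 < eps0 &
      forall eps : R, 0 <= eps <= eps0 ->
        (f (move x (- eps) i j) + f (move y eps i j) <= f x + f y)%E.

Definition dderiv f x (i j : 'I_n) : \bar R :=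
  lim ((fun a : R => ((f (move x a i j) - f x) * (a^-1)%:E)%E) @ 0^'+).

Definition phiR f x : \bar R :=
  \big[Order.min/+oo%E]_(i < n) \big[Order.min/+oo%E]_(j < n) dderiv f x i j.

Definition norm1 x : R := \sum_(i < n) `|x i|.

Definition bounded_coords (S : set ('I_n -> R)) :=
  exists M : R, forall x, S x -> forall i, `|x i| <= M.

End Defs.

From HB Require Import structures.
From mathcomp Require Import all_boot all_order all_algebra.
From mathcomp Require Import all_classical all_reals all_analysis.
From mathcomp Require Import ring lra.
Import Order.TTheory GRing.Theory Num.Theory.
Import numFieldNormedType.Exports.
Set Implicit Arguments. Unset Strict Implicit. Unset Printing Implicit Defensive.
Local Open Scope classical_set_scope.
Local Open Scope ring_scope.

(* Let r be a lower bound for all difference quotients of f at x, so that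
   f (x + e (chi_i - chi_j)) >= f x + e r for every e > 0.  At any z <> x in
   the domain, the exchange axiom applied towards x yields e > 0 with
   f (z - e (chi_i - chi_j)) + f (x + e (chi_i - chi_j)) <= f z + f x, and
   the new point is 2 e closer to x in the 1-norm.  Hence the potential
   z |-> f z - (r/2) |z - x|_1 does not increase along such steps, and the
   point of least 1-norm distance to x in the compact sublevel set
   {potential <= potential y} must be x itself: f y - f x >= (r/2) |y - x|_1.
   By convexity the difference quotients dominate the directional derivatives,
   so r = phi_R(x) is admissible; if phi_R(x) = +oo every r is, forcing y = x. *)

Section polyhedral.
Variables (R : realType) (n : nat) (f : ('I_n -> R) -> \bar R).
Hypothesis f_no_minfty : no_minfty f.

Lemma domR_EFin x : domR f x -> f x = (fine (f x))%:E.
Proof. by move=> dx; rewrite fineK // fin_numE f_no_minfty -ltey. Qed.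

Lemma domR_le x t : (f x <= t%:E)%E -> domR f x.
Proof. by move=> fx; apply: le_lt_trans fx (ltry _). Qed.

Lemma domR_adde_le u v t : (f u + f v <= t%:E)%E -> domR f u /\ domR f v.
Proof.
rewrite /domR /=; move: (f_no_minfty u) (f_no_minfty v).
by case: (f u) => [a||] //; case: (f v) => [b||] // *; rewrite !ltry.
Qed.

Hypothesis f_polyhedral : epi_polyhedral f.

Lemma epi_polyhedral_convex u v (l : R) : domR f u -> domR f v -> 0 <= l <= 1 ->
  (f (fun k => l * u k + (1 - l) * v k)%R <=
     (l * fine (f u) + (1 - l) * fine (f v))%R%:E)%E.
Proof.
move=> du dv /andP[l_ge0 l_le1]; have [m [A [b [c epiE]]]] := f_polyhedral.
have /epiE hu : (f u <= (fine (f u))%:E)%E by rewrite -domR_EFin.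
have /epiE hv : (f v <= (fine (f v))%:E)%E by rewrite -domR_EFin.
apply/epiE => k.
have sum_comb : \sum_(i < n) A k i * (l * u i + (1 - l) * v i) =
    l * \sum_(i < n) A k i * u i + (1 - l) * \sum_(i < n) A k i * v i.
  by rewrite !mulr_sumr -big_split; apply: eq_bigr => i _; rewrite mulrDr ![A k i * _]mulrCA.
have comb : \sum_(i < n) A k i * (l * u i + (1 - l) * v i) +
      b k * (l * fine (f u) + (1 - l) * fine (f v)) =
    l * (\sum_(i < n) A k i * u i + b k * fine (f u)) +
    (1 - l) * (\sum_(i < n) A k i * v i + b k * fine (f v)).
  by rewrite sum_comb; ring.
have cE : c k = l * c k + (1 - l) * c k by ring.
by rewrite comb [leRHS]cE lerD // ler_wpM2l // subr_ge0.
Qed.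

Definition dquot x i j (a : R) : \bar R :=
  ((f (move x a i j) - f x) * (a^-1)%:E)%E.

Lemma dquot_nondecreasing x i j : domR f x ->
  {in `]0, +oo[ &, nondecreasing_fun (dquot x i j)}.
Proof.
move=> dx a b; rewrite !in_itv /= !andbT => a_gt0 b_gt0 ab.
have [db|ndb] := boolP (f (move x b i j) < +oo)%E; last first.
  rewrite /dquot; have -> : f (move x b i j) = +oo%E.
    by apply/eqP; rewrite -leye_eq leNgt.
  by rewrite (domR_EFin dx) addye // gt0_mulye ?leey // lte_fin invr_gt0.
set l := a / b.
have l01 : 0 <= l <= 1.
  by rewrite /l ler_pdivrMr // mul1r ab divr_ge0 // ltW.
have moveE : move x a i j = (fun k => l * move x b i j k + (1 - l) * x k)%R.
  by apply/funext => k; rewrite /move /l; field; exact: lt0r_neq0.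
have := epi_polyhedral_convex db dx l01.
rewrite -moveE => conv; have da := domR_le conv.
rewrite /dquot (domR_EFin da) (domR_EFin db) (domR_EFin dx).
rewrite -!EFinB -!EFinM lee_fin ler_pdivrMr //.
rewrite (domR_EFin da) lee_fin in conv.
by rewrite mulrAC -mulrA -/l mulrC; lra.
Qed.

Lemma dderiv_le_dquot x i j e : domR f x -> 0 < e ->
  (dderiv f x i j <= dquot x i j e)%E.
Proof.
move=> dx e_gt0.
rewrite /dderiv (cvg_lim _ (nondecreasing_at_right_cvge _ _ (dquot_nondecreasing i j dx))) //.
by apply: ereal_inf_lbound; exists e => //=; rewrite in_itv /= e_gt0.
Qed.

End polyhedral.

Section exchange.
Variables (R : realType) (n : nat).
Implicit Types (x z : 'I_n -> R).

Lemma norm1_move_toward x z i j e : 0 < e -> e <= z i - x i -> e <= x j - z j ->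
  norm1 (fun k => move z (- e) i j k - x k) = norm1 (fun k => z k - x k) - 2 * e.
Proof.
move=> e_gt0 ezi exj.
have ij : i != j by apply/eqP => ij; move: exj; rewrite -ij; lra.
have termE k : `|move z (- e) i j k - x k| =
    `|z k - x k| - e * ((k == i)%:R + (k == j)%:R).
  rewrite /move /chi; have [->|ki] := eqVneq k i.
    by rewrite (negPf ij) /= !ger0_norm; lra.
  have [kj|kj] := eqVneq k j.
    by rewrite kj /= !ler0_norm; lra.
  by rewrite /= subrr mulr0 !addr0 mulr0 subr0.
have sum_delta a : \sum_(k < n) ((k == a)%:R : R) = 1.
  by rewrite (bigD1 a) //= eqxx big1 ?addr0 // => k /negPf ->.
rewrite /norm1 (eq_bigr _ (fun k _ => termE k)) sumrB -mulr_sumr big_split /=.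
by rewrite !sum_delta; lra.
Qed.

Lemma M_convex_exchange f x z : M_convex f -> domR f x -> domR f z -> z <> x ->
  exists i j e, [/\ 0 < e, e <= z i - x i, e <= x j - z j &
    (f (move z (- e) i j) + f (move x e i j) <= f z + f x)%E].
Proof.
case=> _ exch dx dz zx.
have [i xz_i] : exists i, x i < z i.
  have /existsNP [k zx_k] : ~ forall k, z k = x k by move=> h; apply/zx/funext.
  case: (ltgtP (x k) (z k)) => [xz_k|zx'_k|xz_k]; first by exists k.
    by have [j [xz_j _]] := exch x z dx dz k zx'_k; exists j.
  by exfalso; apply: zx_k.
have [j [zx_j [eps0 eps0_gt0 exch_ij]]] := exch z x dz dx i xz_i.
pose e := Order.min eps0 (Order.min (z i - x i) (x j - z j)).
have e_gt0 : 0 < e by rewrite !lt_min eps0_gt0 !subr_gt0 xz_i zx_j.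
exists i, j, e; split => //; try by rewrite !ge_min lexx ?orbT.
by apply: exch_ij; rewrite ltW //= ge_min lexx.
Qed.

End exchange.

Section row_vectors.
Variables (R : realType) (n : nat).

Lemma continuous_norm1_sub (x : 'I_n -> R) :
  continuous (fun v : 'rV[R]_n => norm1 (fun k => v ord0 k - x k)).
Proof.
apply: (continuous_big add_continuous) => k _ v.
apply: (continuous_comp (f := fun v : 'rV[R]_n => v ord0 k - x k)).
  apply: (@continuousB _ _ _ (fun w : 'rV[R]_n => w ord0 k) (fun=> x k)).
    exact: coord_continuous.
  exact: cst_continuous.
exact: norm_continuous.
Qed.

Lemma bounded_set_rV (S : set 'rV[R]_n) (M : R) :
  (forall v, S v -> forall i, `|v ord0 i| <= M) -> bounded_set S.
Proof.
move=> S_le; exists (Num.max M 0); split; first exact: num_real.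
move=> M' MM' v Sv; have M_le : Num.max M 0 <= M' := ltW MM'.
rewrite /Num.norm /= mx_normrE; apply: bigmax_le => [|[a k] _ /=].
  by apply: le_trans M_le; rewrite le_max lexx orbT.
rewrite (ord1 a); apply: le_trans (S_le _ Sv k) _.
by apply: le_trans M_le; rewrite le_max lexx.
Qed.

Lemma closed_sublevel_rV (f : ('I_n -> R) -> \bar R) (g : 'rV[R]_n -> R) :
  epi_polyhedral f -> continuous g ->
  closed [set v : 'rV[R]_n | (f (v ord0) <= (g v)%:E)%E].
Proof.
move=> [m [A [b [c epiE]]]] g_cont.
pose h k (v : 'rV[R]_n) := \sum_(i < n) A k i * v ord0 i + b k * g v.
have -> : [set v : 'rV[R]_n | (f (v ord0) <= (g v)%:E)%E] =
    \bigcap_(k in setT) (h k @^-1` [set t | t <= c k]).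
  by apply/seteqP; split => v /= => [/epiE hv k _ | hv]; [|apply/epiE => k]; exact: hv.
apply: closed_bigI => k _; apply: preimage_closed; last exact: closed_le.
move=> v _; rewrite /h.
apply: (@continuousD _ _ _ (fun w : 'rV[R]_n => \sum_(i < n) A k i * w ord0 i) (fun w => b k * g w)).
  apply: (continuous_big add_continuous) => i _ w.
  apply: (@continuousM _ _ (fun=> A k i) (fun w : 'rV[R]_n => w ord0 i)).
    exact: cst_continuous.
  exact: coord_continuous.
apply: (@continuousM _ _ (fun=> b k) g); last exact: g_cont.
exact: cst_continuous.
Qed.

End row_vectors.

Section slope_bound.
Variables (R : realType) (n : nat) (f : ('I_n -> R) -> \bar R).
Hypotheses (fM : M_convex f) (f_bounded : bounded_coords (domR f)).
Variables (x : 'I_n -> R) (r : R).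
Hypothesis dx : domR f x.
Hypothesis dquot_ge : forall i j e, 0 < e -> (r%:E <= dquot f x i j e)%E.

Let f_no_minfty : no_minfty f. Proof. by case: fM => -[]. Qed.
Let f_polyhedral : epi_polyhedral f. Proof. by case: fM => -[]. Qed.

Let dist z := norm1 (fun k => z k - x k).
Let potential z := fine (f z) - r / 2 * dist z.

Lemma potential_descent z : domR f z -> z <> x ->
  exists2 z', domR f z' & dist z' < dist z /\ potential z' <= potential z.
Proof.
move=> dz zx; have [i [j [e [e_gt0 ezi exj exch]]]] := M_convex_exchange fM dx dz zx.
rewrite (domR_EFin f_no_minfty dz) (domR_EFin f_no_minfty dx) -EFinD in exch.
have [dz' dxe] := domR_adde_le f_no_minfty exch.
have step : e * r <= fine (f (move x e i j)) - fine (f x).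
  have := dquot_ge i j e_gt0.
  rewrite /dquot (domR_EFin f_no_minfty dxe) (domR_EFin f_no_minfty dx).
  by rewrite -EFinB -EFinM lee_fin ler_pdivlMr // mulrC.
rewrite (domR_EFin f_no_minfty dz') (domR_EFin f_no_minfty dxe) -EFinD lee_fin in exch.
exists (move z (- e) i j) => //.
by rewrite /potential /dist norm1_move_toward //; split; lra.
Qed.

Lemma potential_le y : domR f y -> potential x <= potential y.
Proof.
move=> dy.
pose S := [set v : 'rV[R]_n | (f (v ord0) <= (potential y + r / 2 * dist (v ord0))%:E)%E].
have S_potential (v : 'rV[R]_n) :
    domR f (v ord0) -> S v <-> potential (v ord0) <= potential y.
  move=> dv; rewrite /S /= (domR_EFin f_no_minfty dv) lee_fin /potential.
  by split; lra.
have rowK (z : 'I_n -> R) : (\row_k z k) ord0 = z by apply/funext => k; rewrite mxE.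
have Sy : S (\row_k y k) by apply/S_potential; rewrite rowK.
have S_compact : compact S.
  apply: bounded_closed_compact.
    have [M le_M] := f_bounded.
    by apply: (@bounded_set_rV _ _ _ M) => v /domR_le; apply: le_M.
  apply: closed_sublevel_rV f_polyhedral _ => v.
  apply: (@continuousD _ _ _ (fun=> potential y) (fun w : 'rV[R]_n => r / 2 * dist (w ord0))).
    exact: cst_continuous.
  apply: (@continuousM _ _ (fun=> r / 2) (fun w : 'rV[R]_n => dist (w ord0))).
    exact: cst_continuous.
  exact: continuous_norm1_sub.
have [c /set_mem Sc c_min] := EVT_min_rV (ex_intro _ _ Sy) S_compact
  (continuous_subspaceT (continuous_norm1_sub (x:=x))).
have dc : domR f (c ord0) := domR_le Sc.
have [cx|cx] := pselect (c ord0 = x); first by rewrite -cx; apply/S_potential.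
have [z dz [dist_lt potential_z]] := potential_descent dc cx.
have Sz : S (\row_k z k).
  by apply/S_potential; rewrite rowK //; apply: le_trans potential_z _; apply/S_potential.
by have := c_min _ (mem_set Sz); rewrite rowK => /(lt_le_trans dist_lt); rewrite ltxx.
Qed.

Lemma slope_bound y : domR f y ->
  2^-1 * norm1 (fun k => y k - x k) * r <= fine (f y) - fine (f x).
Proof.
move=> /potential_le; rewrite /potential /dist.
have -> : norm1 (fun k => x k - x k) = 0.
  by rewrite /norm1 big1 // => k _; rewrite subrr normr0.
lra.
Qed.

End slope_bound.

Lemma phiR_le_dderiv (R : realType) (n : nat) (f : ('I_n -> R) -> \bar R) x i j :
  (phiR f x <= dderiv f x i j)%E.
Proof. by apply: le_trans (bigmin_le _ i _) _; apply: bigmin_le. Qed.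

Lemma norm1_sub_eq0 (R : realType) (n : nat) (x y : 'I_n -> R) :
  norm1 (fun k => y k - x k) = 0 -> y = x.
Proof.
move=> /eqP; rewrite psumr_eq0 // => /allP y_x; apply/funext => k.
by apply/eqP; rewrite -subr_eq0 -normr_eq0; apply: y_x; rewrite mem_index_enum.
Qed.

Theorem mainTheorem13 (R : realType) (n : nat) (f : ('I_n -> R) -> \bar R) :
  M_convex f -> bounded_coords (domR f) ->
  forall x y : 'I_n -> R, domR f x -> domR f y ->
    (((2^-1 * norm1 (fun k => y k - x k))%:E * phiR f x) <= f y - f x)%E.
Proof.
move=> fM f_bounded x y dx dy.
have f_no_minfty : no_minfty f by case: fM => -[].
have f_polyhedral : epi_polyhedral f by case: fM => -[].
have phiR_le_dquot i j e : 0 < e -> (phiR f x <= dquot f x i j e)%E.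
  by move=> e_gt0; rewrite (le_trans (phiR_le_dderiv f x i j)) // dderiv_le_dquot.
rewrite (domR_EFin f_no_minfty dy) (domR_EFin f_no_minfty dx) -EFinB.
set N := norm1 _; have [N0|N_neq0] := eqVneq N 0.
  by rewrite N0 mulr0 mul0e (norm1_sub_eq0 N0) subrr.
have N_gt0 : 0 < N by rewrite lt0r N_neq0 sumr_ge0.
case phi_x: (phiR f x) => [t||].
- rewrite -EFinM lee_fin /N; apply: (slope_bound fM f_bounded dx _ dy) => i j e e_gt0.
  by rewrite -phi_x phiR_le_dquot.
- exfalso; set D := fine (f y) - fine (f x).
  have := slope_bound (r := 2 * (D + 1) / N) fM f_bounded dx _ dy.
  have -> : 2^-1 * N * (2 * (D + 1) / N) = D + 1 by field.
  suff dquot_ge : forall i j e, 0 < e ->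
    ((2 * (D + 1) / N)%:E <= dquot f x i j e)%E.
    by move=> /(_ dquot_ge); rewrite -/D; lra.
  move=> i j e e_gt0.
  by rewrite (le_trans _ (phiR_le_dquot i j e e_gt0)) // phi_x leey.
- by rewrite gt0_muleNy ?leNye // lte_fin mulr_gt0 // invr_gt0.
Qed.
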